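(* Suppose the synchronizing automaton $\mathcal{A}$ with $n$ states is semisimple, and let $\mathcal{C}\subseteq[1,k]$ be a minimal core of $\mathcal{A}$. Then there is a reset word $w$ with $|w|\le(n-1)\max_{i\in\mathcal{C}}\{D(2,r_i,n)\}$, where $r_i=\mathrm{Rnk}(\mathcal{I}_i)$.
   Context: Let $\mathcal{A}=\langle Q,\Sigma,\delta\rangle$ be a synchronizing automaton with $n=|Q|$ states $q_1,\dots,q_n$; write $q\cdot u$ for the action of $u\in\Sigma^*$, $\mathrm{rk}(u)=|Q\cdot u|$, and $\mathrm{Syn}(\mathcal{A})$ for the set of reset words ($|Q\cdot u|=1$). Each word acts linearly on $\mathbb{C}Q$ by $q\mapsto q\cdot u$, preserving $w^\perp=\{x:\langle x,q_1+\dots+q_n\rangle=0\}$; let $\rho:\Sigma^*\to\mathbb{M}_{n-1}(\mathbb{C})$ be the induced representation, $\mathcal{R}$ the $\mathbb{C}$-algebra generated by $\rho(\Sigma^* )$, and $\mathrm{Rad}(\mathcal{A})=\rho^{-1}(\mathrm{Rad}(\mathcal{R}))$ (Jacobson radical). $\mathcal{A}$ is semisimple if $\mathrm{Rad}(\mathcal{A})=\mathrm{Syn}(\mathcal{A})$. Write $\mathcal{R}/\mathrm{Rad}(\mathcal{R})\cong\prod_{i=1}^k\mathbb{M}_{n_i}(\mathbb{C})$ (Wedderburn–Artin) and let $\theta_i:\Sigma^*\to\mathbb{M}_{n_i}(\mathbb{C})$ be $\rho$ followed by the quotient map and the $i$-th projection; $0_i$ is the zero matrix. The monoid $\theta_i(\Sigma^*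 )$ has a unique $0$-minimal ideal $\mathcal{I}_i$; $\mathrm{Rnk}(\mathcal{I}_i)=\min\{\mathrm{rk}(x): \theta_i(x)\in\mathcal{I}_i\setminus\{0_i\}\}$. A subset $T\subseteq[1,k]$ is a core if every word $x$ with $\theta_i(x)=0_i$ for all $i\in T$ satisfies $\theta_i(x)=0_i$ for all $i\in[1,k]$; a minimal core is one minimal under inclusion. $D(2,r,n)$ denotes the maximum size of a family of $r$-element subsets of $[1,n]$ in which every $2$-element subset is contained in at most one member. *)

From mathcomp Require Import all_boot all_algebra.
From mathcomp Require Import complex.
From mathcomp Require Import Rstruct.

Set Implicit Arguments.
Unset Strict Implicit.
Unset Printing Implicit Defensive.

Import GRing.Theory.
Local Open Scope ring_scope.

Definition C : numClosedFieldType := complex Rdefinitions.R.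

Section Automata.

(* An automaton with state set Q = 'I_n (states q_1..q_n are 0..n-1),
   finite alphabet Sigma, transition function delta. Words are seq Sigma. *)
Variables (n : nat) (Sigma : finType) (delta : 'I_n -> Sigma -> 'I_n).

Definition act (q : 'I_n) (u : seq Sigma) : 'I_n := foldl delta q u.

Definition rk (u : seq Sigma) : nat := #|[set act q u | q : 'I_n]|.

Definition is_reset (u : seq Sigma) : Prop := rk u = 1%N.

Definition synchronizing : Prop := exists u, is_reset u.

(* Matrix of the linear action of u on CQ (row vectors, basis q_1..q_n):
   q *m actmx u = q . u *)
Definition actmx (u : seq Sigma) : 'M[C]_n :=
  \matrix_(q, p) ((act q u == p)%:R : C).

(* The basis (q_j - q_n)_{j = 1..n-1} of w^perp, as the rows of a matrix. *)
Definition wperp_basis : 'M[C]_(n.-1, n) :=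
  \matrix_(j, q) (((val q == val j)%:R : C) - ((val q == n.-1)%:R : C)).

(* rho(u): the matrix of the action of u restricted to the invariant
   subspace w^perp, in the basis wperp_basis (coordinates obtained with the
   partial inverse pinvmx). *)
Definition rho (u : seq Sigma) : 'M[C]_(n.-1) :=
  wperp_basis *m actmx u *m pinvmx wperp_basis.

Definition is_subalg (S : 'M[C]_(n.-1) -> Prop) : Prop :=
  [/\ S 1%:M,
      forall A B, S A -> S B -> S (A + B),
      forall (c : C) A, S A -> S (c *: A)
    & forall A B, S A -> S B -> S (A *m B)].

(* R: the C-algebra generated by rho(Sigma^* ) (smallest subalgebra). *)
Definition inR (A : 'M[C]_(n.-1)) : Prop :=
  forall S, is_subalg S -> (forall u, S (rho u)) -> S A.

(* Jacobson radical of R: x in R such that 1 - r x is a unit of R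
   for every r in R. *)
Definition inRad (x : 'M[C]_(n.-1)) : Prop :=
  inR x /\
  forall r, inR r ->
    exists y, [/\ inR y, y *m (1%:M - r *m x) = 1%:M
                       & (1%:M - r *m x) *m y = 1%:M].

(* Rad(A) = rho^{-1}(Rad(R)); A semisimple iff Rad(A) = Syn(A). *)
Definition inRadA (u : seq Sigma) : Prop := inRad (rho u).

Definition semisimple : Prop := forall u, inRadA u <-> is_reset u.

(* A Wedderburn-Artin decomposition R / Rad(R) ~= prod_{i<k} M_{ns i}(C),
   given as the composite of the quotient map with the isomorphism, i.e. a
   family of maps phi_i (only their restriction to R matters) that together
   form a surjective unital algebra morphism R -> prod_i M_{ns i}(C) whose
   kernel is Rad(R). *)
Definition wedderburn (k : nat) (ns : 'I_k -> nat)
  (phi : forall i : 'I_k, 'M[C]_(n.-1) -> 'M[C]_(ns i)) : Prop :=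
  (forall i, (0 < ns i)%N) /\
  (forall i, phi i 1%:M = 1%:M) /\
  (forall i A B, inR A -> inR B -> phi i (A + B) = phi i A + phi i B) /\
  (forall i (c : C) A, inR A -> phi i (c *: A) = c *: phi i A) /\
  (forall i A B, inR A -> inR B -> phi i (A *m B) = phi i A *m phi i B) /\
  (forall M : forall i, 'M[C]_(ns i),
     exists A, inR A /\ forall i, phi i A = M i) /\
  (forall A, inR A -> ((forall i, phi i A = 0) <-> inRad A)).

Section Theta.
Variables (k : nat) (ns : 'I_k -> nat)
  (phi : forall i : 'I_k, 'M[C]_(n.-1) -> 'M[C]_(ns i)).

Definition theta (i : 'I_k) (u : seq Sigma) : 'M[C]_(ns i) := phi i (rho u).

Definition in_theta_monoid (i : 'I_k) (M : 'M[C]_(ns i)) : Prop :=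
  exists u, M = theta i u.

Definition is_ideal (i : 'I_k) (J : 'M[C]_(ns i) -> Prop) : Prop :=
  [/\ exists M, J M,
      forall M, J M -> in_theta_monoid M
    & forall S M, in_theta_monoid S -> J M -> J (S *m M) /\ J (M *m S)].

Definition zero_minimal_ideal (i : 'I_k) (J : 'M[C]_(ns i) -> Prop) : Prop :=
  [/\ is_ideal J,
      exists M, J M /\ M <> 0
    & forall K, is_ideal K -> (forall M, K M -> J M) ->
        (forall M, K M <-> M = 0) \/ (forall M, K M <-> J M)].

Definition is_Rnk (i : 'I_k) (J : 'M[C]_(ns i) -> Prop) (r : nat) : Prop :=
  (exists x, [/\ J (theta i x), theta i x <> 0 & rk x = r]) /\
  (forall x, J (theta i x) -> theta i x <> 0 -> (r <= rk x)%N).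

Definition is_core (T : {set 'I_k}) : Prop :=
  forall x, (forall i, i \in T -> theta i x = 0) -> forall i, theta i x = 0.

Definition is_minimal_core (T : {set 'I_k}) : Prop :=
  is_core T /\ forall T' : {set 'I_k}, T' \proper T -> ~ is_core T'.

End Theta.

End Automata.

Definition packing (n r : nat) (F : {set {set 'I_n}}) : bool :=
  [forall A in F, #|A| == r] &&
  [forall P : {set 'I_n}, (#|P| == 2) ==> (#|[set A in F | P \subset A]| <= 1)%N].

Definition D2 (r n : nat) : nat :=
  \max_(F : {set {set 'I_n}} | packing r F) #|F|.

(* Reset words are built greedily, each phase lowering the rank by at least one, so
   n - 1 phases suffice.  In a phase starting from a non-reset word w, pick a component i
   of the minimal core with theta_i(w) <> 0.  Minimality of the core and primeness of the
   full matrix algebra give a word g0 such that g = g0 w is killed by the other core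
   components while theta_i(g) is a nonzero element of the ideal I_i of rank r_i.  Then
   every continuation of g either resets or keeps rank r_i, so the set Q.g can only be
   collapsed all at once.  The images of Q.g under the proper prefixes of a shortest
   collapsing word are r_i-sets no two of which share a pair of states, so its length is
   at most D(2, r_i, n). *)

From Pilot Require Import Defs.
From mathcomp Require Import all_boot all_algebra zify.
From Stdlib Require Import Classical.

Set Implicit Arguments.
Unset Strict Implicit.
Unset Printing Implicit Defensive.

Import GRing.Theory.

Section SubsetAction.
Variables (n : nat) (Sigma : finType) (delta : 'I_n -> Sigma -> 'I_n).

Local Notation act := (act delta).
Local Notation rk := (rk delta).
Local Notation is_reset := (is_reset delta).

Definition act_set (T : {set 'I_n}) (u : seq Sigma) : {set 'I_n} :=
  [set act q u | q in T].

Lemma act_cat q u v : act q (u ++ v) = act (act q u) v.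
Proof. by rewrite /Defs.act foldl_cat. Qed.

Lemma act_set_cat (T : {set 'I_n}) u v :
  act_set T (u ++ v) = act_set (act_set T u) v.
Proof. by rewrite /act_set -imset_comp; apply: eq_imset => q; apply: act_cat. Qed.

Lemma act_setS (T T' : {set 'I_n}) u :
  T \subset T' -> act_set T u \subset act_set T' u.
Proof. exact: imsetS. Qed.

Lemma card_act_set_le (T : {set 'I_n}) u : #|act_set T u| <= #|T|.
Proof. exact: leq_imset_card. Qed.

Lemma card_act_set_gt0 (T : {set 'I_n}) u : 0 < #|T| -> 0 < #|act_set T u|.
Proof.
by case/card_gt0P => q qT; apply/card_gt0P; exists (act q u); apply: imset_f.
Qed.

Lemma rkE u : rk u = #|act_set setT u|.
Proof.
by apply: eq_card => q; rewrite /act_set; apply/imsetP/imsetP => -[p _ ->]; exists p.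
Qed.

Lemma rk_catl u v : rk (u ++ v) <= rk u.
Proof. by rewrite !rkE act_set_cat card_act_set_le. Qed.

Lemma rk_catr u v : rk (u ++ v) <= rk v.
Proof. by rewrite !rkE act_set_cat subset_leq_card ?act_setS ?subsetT. Qed.

Lemma card_act_set_ltn_sup (P A : {set 'I_n}) u :
  P \subset A -> #|act_set P u| < #|P| -> #|act_set A u| < #|A|.
Proof.
move=> sPA; rewrite !ltn_neqAle !card_act_set_le !andbT; apply: contra.
move=> /imset_injP injA; apply/imset_injP => p q /(subsetP sPA) pA /(subsetP sPA).
exact: injA.
Qed.

Definition rank_stable (T : {set 'I_n}) (r : nat) :=
  forall u, #|act_set T u| = 1 \/ #|act_set T u| = r.

Section ShortestCollapsingWord.
Variables (T : {set 'I_n}) (r : nat) (t : seq Sigma).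
Hypotheses (r_gt1 : 1 < r) (cardT : #|T| = r) (stableT : rank_stable T r).
Hypothesis collapse_t : #|act_set T t| = 1.
Hypothesis shortest_t : forall u, #|act_set T u| = 1 -> size t <= size u.

Let A j := act_set T (take j t).

Lemma card_prefix_image j : j < size t -> #|A j| = r.
Proof.
move=> jt; case: (stableT (take j t)) => // /shortest_t.
by rewrite size_take jt leqNgt jt.
Qed.

(* Otherwise cutting out the factor of t between positions j and k would give a
   shorter word collapsing T. *)
Lemma prefix_images_share_no_pair j k (P : {set 'I_n}) :
  j < k <= size t -> #|P| = 2 -> P \subset A j -> P \subset A k -> False.
Proof.
move=> /andP[jk kt] cardP sPj sPk; pose v := drop k t.
have collapse_k : #|act_set (A k) v| = 1 by rewrite -act_set_cat cat_take_drop.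
have merge_P : #|act_set P v| < #|P|.
  by rewrite cardP ltnS -collapse_k subset_leq_card ?act_setS.
have := card_act_set_ltn_sup sPj merge_P.
rewrite card_prefix_image ?(leq_trans jk) // -act_set_cat.
case: (stableT (take j t ++ v)) => [/shortest_t|->]; last by rewrite ltnn.
rewrite size_cat size_take size_drop (leq_trans jk kt); lia.
Qed.

Lemma prefix_image_pair j :
  j < size t -> exists2 P : {set 'I_n}, #|P| = 2 & P \subset A j.
Proof.
move=> jt; have /card_gt1P[p [q [pA qA pq]]] : 1 < #|A j| by rewrite card_prefix_image.
exists [set p; q]; first by rewrite cards2 pq.
by apply/subsetP => x; rewrite !inE => /orP[] /eqP ->.
Qed.

Let F := [set A j | j : 'I_(size t)].

Lemma prefix_images_inj : injective (fun j : 'I_(size t) => A j).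
Proof.
move=> j k Ajk; apply: val_inj; have [P cardP sPj] := prefix_image_pair (ltn_ord j).
have sPk : P \subset A k by rewrite -Ajk.
case: (ltngtP j k) => // [jk|kj].
  by case: (prefix_images_share_no_pair (P := P) _ cardP sPj sPk); rewrite jk ltnW.
by case: (prefix_images_share_no_pair (P := P) _ cardP sPk sPj); rewrite kj ltnW.
Qed.

Lemma prefix_images_packing : packing r F.
Proof.
apply/andP; split.
  by apply/forall_inP => _ /imsetP[j _ ->]; rewrite card_prefix_image.
apply/forallP => P; apply/implyP => /eqP cardP; rewrite leqNgt.
apply/card_gt1P => -[B1 [B2 []]]; rewrite !inE.
move=> /andP[/imsetP[j _ ->] sPj] /andP[/imsetP[k _ ->] sPk] Ajk.
case: (ltngtP j k) => [jk|kj|/val_inj jk]; last by rewrite jk eqxx in Ajk.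
  by apply: (prefix_images_share_no_pair (P := P) _ cardP sPj sPk); rewrite jk ltnW.
by apply: (prefix_images_share_no_pair (P := P) _ cardP sPk sPj); rewrite kj ltnW.
Qed.

Lemma size_shortest_collapsing_le : size t <= D2 r n.
Proof.
rewrite -[size t]card_ord -(card_imset _ prefix_images_inj).
exact: (@leq_bigmax_cond _ (packing r) (fun F => #|F|) _ prefix_images_packing).
Qed.

End ShortestCollapsingWord.

Lemma short_collapsing_word (T : {set 'I_n}) r s :
  1 < r -> #|T| = r -> rank_stable T r -> #|act_set T s| = 1 ->
  exists2 u, #|act_set T u| = 1 & size u <= D2 r n.
Proof.
move=> r_gt1 cardT stableT collapse_s.
have ex_len : exists L, [exists u : L.-tuple Sigma, #|act_set T u| == 1].
  by exists (size s); apply/existsP; exists (in_tuple s); apply/eqP.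
case: (ex_minnP ex_len) => L /existsP[t /eqP collapse_t] minL.
exists t => //.
apply: (size_shortest_collapsing_le r_gt1 cardT stableT collapse_t) => u collapse_u.
rewrite size_tuple; apply: minL; apply/existsP; exists (in_tuple u); exact/eqP.
Qed.

Lemma rank_reduction_of_stable_subset w (T : {set 'I_n}) r :
  synchronizing delta -> T \subset act_set setT w -> 1 < r -> #|T| = r ->
  rank_stable T r -> exists2 u, size u <= D2 r n & rk (w ++ u) < rk w.
Proof.
move=> [s reset_s] sTw r_gt1 cardT stableT.
have collapse_s : #|act_set T s| = 1.
  apply/eqP; rewrite eqn_leq card_act_set_gt0 ?cardT ?(ltnW r_gt1) // andbT.
  by rewrite -reset_s rkE subset_leq_card ?act_setS ?subsetT.
have [u collapse_u size_u] := short_collapsing_word r_gt1 cardT stableT collapse_s.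
exists u => //; rewrite !rkE act_set_cat.
by apply: card_act_set_ltn_sup sTw _; rewrite collapse_u cardT.
Qed.

Lemma reset_extension_of_rank_reduction Mx :
  (forall w, ~ is_reset w -> exists2 u, size u <= Mx & rk (w ++ u) < rk w) ->
  forall m w, rk w <= m.+1 -> exists2 v, is_reset (w ++ v) & size v <= m * Mx.
Proof.
move=> reduce; elim=> [|m IHm] w rk_w;
  have [reset_w|not_reset] := classic (is_reset w); try by exists [::]; rewrite ?cats0.
  have [u _ rk_wu] := reduce w not_reset; move: not_reset; rewrite /Defs.is_reset; lia.
have [u size_u rk_wu] := reduce w not_reset.
have [v reset_wuv size_v] := IHm (w ++ u) (leq_trans rk_wu rk_w).
by exists (u ++ v); rewrite ?catA // size_cat mulSn leq_add.
Qed.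

End SubsetAction.

Local Open Scope ring_scope.

Lemma sum_delta_mul (p : nat) (F : 'I_p -> C) (i : 'I_p) :
  \sum_(q < p) (q == i)%:R * F q = F i.
Proof.
rewrite (bigD1 i) //= eqxx mul1r (@big1 C 0) ?addr0 // => q /negbTE->.
by rewrite mul0r.
Qed.

Lemma sum_natr_eq (p : nat) (i : 'I_p) : \sum_(q < p) (q == i)%:R = 1 :> C.
Proof. by rewrite -[RHS](sum_delta_mul (fun=> 1) i); apply: eq_bigr => q _; rewrite mulr1. Qed.

Section WPerp.
Variables (m : nat) (Sigma : finType) (delta : 'I_m.+1 -> Sigma -> 'I_m.+1).

Local Notation W := (wperp_basis m.+1).
Local Notation actmx := (actmx delta).
Local Notation rho := (rho delta).

Definition ones : 'cV[C]_m.+1 := const_mx 1.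

Lemma row_free_wperp_basis : row_free W.
Proof.
apply/row_freeP; exists (\matrix_(q, j) (val q == val j)%:R).
apply/matrixP => i j; rewrite !mxE big_ord_recr /= !mxE eqxx.
rewrite [m == j]eq_sym (ltn_eqF (ltn_ord j)) mulr0 addr0.
rewrite -[RHS](sum_delta_mul (fun q => (q == j)%:R)); apply: eq_bigr => q _.
by rewrite !mxE (ltn_eqF (ltn_ord q)) subr0.
Qed.

Lemma wperp_basis_ones : W *m ones = 0.
Proof.
apply/matrixP => j k; rewrite !mxE big_ord_recr /= !mxE eqxx.
rewrite [m == j]eq_sym (ltn_eqF (ltn_ord j)).
under eq_bigr => q _ do rewrite !mxE (ltn_eqF (ltn_ord q)) subr0 mulr1.
by rewrite sum_natr_eq mulr1 sub0r subrr.
Qed.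

Lemma actmx_ones u : actmx u *m ones = ones.
Proof.
apply/matrixP => q k; rewrite !mxE.
by under eq_bigr => p _ do rewrite !mxE mulr1 eq_sym; apply: sum_natr_eq.
Qed.

Lemma actmx_nil : actmx [::] = 1%:M.
Proof. by apply/matrixP => q p; rewrite !mxE. Qed.

Lemma actmx_cat u v : actmx (u ++ v) = actmx u *m actmx v.
Proof.
apply/matrixP => q p; rewrite !mxE act_cat.
by under eq_bigr => s _ do rewrite !mxE eq_sym; rewrite sum_delta_mul.
Qed.

(* The rows of W span the kernel of the all-ones column, by a dimension count. *)
Lemma sub_wperp_basis k (M : 'M[C]_(k, m.+1)) : M *m ones = 0 -> (M <= W)%MS.
Proof.
move=> /eqP; rewrite -sub_kermx => /submx_trans; apply.
have sWK : (W <= kermx ones)%MS by rewrite sub_kermx wperp_basis_ones.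
rewrite -(geq_leqif (mxrank_leqif_sup sWK)) mxrank_ker (eqP row_free_wperp_basis).
have -> : \rank ones = 1%N.
  rewrite -mxrank_tr rank_rV; apply/eqP; rewrite eqb1; apply/eqP => /matrixP/(_ 0 0).
  by rewrite !mxE; apply/eqP; apply: oner_neq0.
by rewrite subn1.
Qed.

Lemma rho_nil : rho [::] = 1%:M.
Proof. by rewrite /Defs.rho actmx_nil mulmx1 mulmxVp ?row_free_wperp_basis. Qed.

Lemma rho_wperp_basis u : rho u *m W = W *m actmx u.
Proof.
rewrite /Defs.rho mulmxKpV //; apply: sub_wperp_basis.
by rewrite -mulmxA actmx_ones wperp_basis_ones.
Qed.

Lemma rho_cat u v : rho (u ++ v) = rho u *m rho v.
Proof. by rewrite {1}/Defs.rho actmx_cat mulmxA -rho_wperp_basis !mulmxA. Qed.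

End WPerp.

Section WedderburnComponents.
Variables (m : nat) (Sigma : finType) (delta : 'I_m.+1 -> Sigma -> 'I_m.+1).
Variables (k : nat) (ns : 'I_k -> nat) (phi : forall i : 'I_k, 'M[C]_m -> 'M[C]_(ns i)).
Hypothesis wedderburn_phi : wedderburn delta phi.

Local Notation inR := (inR delta).
Local Notation theta := (theta delta phi).

Lemma inR_rho u : inR (rho delta u).
Proof. by move=> S _; apply. Qed.

Lemma inR1 : inR 1%:M.
Proof. by move=> S; case. Qed.

Lemma inRD A B : inR A -> inR B -> inR (A + B).
Proof.
by move=> RA RB S subS Srho; case: (subS) => _ SD _ _; apply: SD; [apply: RA | apply: RB].
Qed.

Lemma inRZ c A : inR A -> inR (c *: A).
Proof. by move=> RA S subS Srho; case: (subS) => _ _ SZ _; apply: SZ; apply: RA. Qed.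

Lemma inRM A B : inR A -> inR B -> inR (A *m B).
Proof.
by move=> RA RB S subS Srho; case: (subS) => _ _ _ SM; apply: SM; [apply: RA | apply: RB].
Qed.

Lemma phi1 i : phi i 1%:M = 1%:M.
Proof. by case: wedderburn_phi => _ [h1 _]; apply: h1. Qed.

Lemma phiD i A B : inR A -> inR B -> phi i (A + B) = phi i A + phi i B.
Proof. by case: wedderburn_phi => _ [_ [hD _]]; apply: hD. Qed.

Lemma phiZ i c A : inR A -> phi i (c *: A) = c *: phi i A.
Proof. by case: wedderburn_phi => _ [_ [_ [hZ _]]]; apply: hZ. Qed.

Lemma phiM i A B : inR A -> inR B -> phi i (A *m B) = phi i A *m phi i B.
Proof. by case: wedderburn_phi => _ [_ [_ [_ [hM _]]]]; apply: hM. Qed.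

Lemma phi_onto (M : forall i, 'M[C]_(ns i)) : exists2 A, inR A & forall i, phi i A = M i.
Proof. by case: wedderburn_phi => _ [_ [_ [_ [_ [/(_ M)[A [RA phiA]] _]]]]]; exists A. Qed.

Lemma phi_eq0 A : inR A -> (forall i, phi i A = 0) <-> inRad delta A.
Proof. by case: wedderburn_phi => _ [_ [_ [_ [_ [_ hK]]]]]; apply: hK. Qed.

Lemma theta_nil i : theta i [::] = 1%:M.
Proof. by rewrite /Defs.theta rho_nil phi1. Qed.

Lemma theta_cat i u v : theta i (u ++ v) = theta i u *m theta i v.
Proof. by rewrite /Defs.theta rho_cat phiM ?inR_rho. Qed.

(* Quantifying over all A, B makes the predicate closed under products. *)
Lemma theta_sandwich_eq0 i (A B : 'M[C]_(ns i)) :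
  (forall u, A *m theta i u *m B = 0) -> forall X, inR X -> A *m phi i X *m B = 0.
Proof.
pose S X := inR X /\ forall A B : 'M[C]_(ns i),
  (forall u, A *m theta i u *m B = 0) -> A *m phi i X *m B = 0.
suff S_subalg : is_subalg S.
  move=> AB0 X RX; apply: (RX S S_subalg _).2 => // u.
  by split=> [|A' B']; [apply: inR_rho | apply].
split.
- split=> [|A' B' AB0]; first exact: inR1.
  by rewrite phi1 -(AB0 [::]) theta_nil.
- move=> X Y [RX SX] [RY SY]; split=> [|A' B' AB0]; first exact: inRD.
  by rewrite phiD // mulmxDr mulmxDl SX // SY // addr0.
- move=> c X [RX SX]; split=> [|A' B' AB0]; first exact: inRZ.
  by rewrite phiZ // -scalemxAr -scalemxAl SX // scaler0.
move=> X Y [RX SX] [RY SY]; split=> [|A' B' AB0]; first exact: inRM.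
rewrite phiM // mulmxA -(mulmxA _ (phi i Y)); apply: SX => u.
by rewrite mulmxA; apply: SY => v; rewrite -(mulmxA A') -theta_cat.
Qed.

(* theta_i(Sigma^* ) spans the full matrix algebra, which is prime. *)
Lemma theta_prime i (A B : 'M[C]_(ns i)) :
  A != 0 -> B != 0 -> exists u, A *m theta i u *m B != 0.
Proof.
case/matrix0Pn=> p [a Apa]; case/matrix0Pn=> b [q Bbq]; apply: NNPP => noU.
have AuB0 u : A *m theta i u *m B = 0.
  by have [//|AuB] := eqVneq (A *m theta i u *m B) 0; case: noU; exists u.
pose E j : 'M[C]_(ns j) := \matrix_(x, y) ((val x == val a) && (val y == val b))%:R.
have [X RX phiX] := phi_onto E.
have := theta_sandwich_eq0 AuB0 RX.
have -> : phi i X = delta_mx a b by rewrite phiX; apply/matrixP => x y; rewrite !mxE.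
rewrite -(mul_delta_mx (0 : 'I_1)) (mulmxA A) -colE -mulmxA -rowE => /matrixP/(_ p q).
by rewrite !mxE big_ord1 !mxE; apply/eqP; apply: mulf_neq0.
Qed.

End WedderburnComponents.

Lemma rk_gt0 (m : nat) (Sigma : finType) (delta : 'I_m.+1 -> Sigma -> 'I_m.+1) u :
  (0 < rk delta u)%N.
Proof. by rewrite rkE card_act_set_gt0 // cardsT card_ord. Qed.

Section MinimalCore.
Variables (m : nat) (Sigma : finType) (delta : 'I_m.+1 -> Sigma -> 'I_m.+1).
Variables (k : nat) (ns : 'I_k -> nat) (phi : forall i : 'I_k, 'M[C]_m -> 'M[C]_(ns i)).
Variable Cr : {set 'I_k}.
Hypotheses (wedderburn_phi : wedderburn delta phi) (semisimple_delta : semisimple delta).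
Hypotheses (core_Cr : is_core delta phi Cr)
  (minimal_Cr : forall T : {set 'I_k}, T \proper Cr -> ~ is_core delta phi T).

Local Notation theta := (theta delta phi).
Local Notation rk := (rk delta).
Local Notation is_reset := (is_reset delta).

Lemma is_reset_theta_eq0 u : is_reset u <-> forall j, theta j u = 0.
Proof.
have [Rad_reset reset_Rad] := semisimple_delta u.
have [theta0_Rad Rad_theta0] := phi_eq0 wedderburn_phi (inR_rho (delta := delta) u).
by split=> [/reset_Rad/Rad_theta0 | /theta0_Rad/Rad_reset].
Qed.

Lemma is_reset_core u : is_reset u <-> forall j, j \in Cr -> theta j u = 0.
Proof.
rewrite is_reset_theta_eq0; split=> [theta0 j _ | ]; [exact: theta0 | exact: core_Cr].
Qed.

Lemma core_separating i : i \in Cr ->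
  exists z, theta i z != 0 /\ forall j, j \in Cr :\ i -> theta j z = 0.
Proof.
move=> iCr; apply: NNPP => no_z; apply: (minimal_Cr (properD1 iCr)) => x x0.
apply: core_Cr => j jCr; have [-> | ji] := eqVneq j i; last by rewrite x0 // !inE ji.
by have [// | xi] := eqVneq (theta i x) 0; case: no_z; exists x.
Qed.

Section FocusedWords.
Variables (i : 'I_k) (J : 'M[C]_(ns i) -> Prop) (r : nat).
Hypotheses (iCr : i \in Cr) (ideal_J : is_ideal delta phi J) (Rnk_J : is_Rnk delta phi J r).

Lemma ideal_mull u M : J M -> J (theta i u *m M).
Proof. by case: ideal_J => _ _ closed JM; apply: (closed _ _ (ex_intro _ u erefl) JM).1. Qed.

Lemma ideal_mulr u M : J M -> J (M *m theta i u).
Proof. by case: ideal_J => _ _ closed JM; apply: (closed _ _ (ex_intro _ u erefl) JM).2. Qed.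

Lemma Rnk_gt1 : (1 < r)%N.
Proof.
case: Rnk_J => -[y [_ y_neq0 <-]] _; rewrite ltn_neqAle eq_sym rk_gt0 andbT.
by apply/eqP => /is_reset_theta_eq0/(_ i).
Qed.

Definition focused g := [/\ J (theta i g), theta i g != 0,
  forall j, j \in Cr :\ i -> theta j g = 0 & (rk g <= r)%N].

Lemma exists_focused w : theta i w != 0 -> exists g0, focused (g0 ++ w).
Proof.
move=> w_neq0; have [z [z_neq0 z0]] := core_separating iCr.
case: Rnk_J => -[y [Jy /eqP y_neq0 rk_y]] _.
have [b zby_neq0] := theta_prime wedderburn_phi z_neq0 y_neq0.
have [c zbycw_neq0] := theta_prime wedderburn_phi zby_neq0 w_neq0.
exists (z ++ b ++ y ++ c); rewrite -!catA; split.
- rewrite catA (theta_cat wedderburn_phi); apply: ideal_mull.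
  by rewrite (theta_cat wedderburn_phi); apply: ideal_mulr.
- by rewrite !(theta_cat wedderburn_phi) !mulmxA.
- by move=> j jCr; rewrite (theta_cat wedderburn_phi) z0 // mul0mx.
rewrite -rk_y (leq_trans (rk_catr _ z _)) // (leq_trans (rk_catr _ b _)) //.
exact: rk_catl.
Qed.

(* Unless g u resets, theta_i(g u) is a nonzero element of J, so rk (g u) = r. *)
Lemma focused_rank_stable g : focused g ->
  rank_stable delta (act_set delta setT g) r /\ #|act_set delta setT g| = r.
Proof.
case=> Jg g_neq0 g0 rk_g.
have r_rk_g : (r <= rk g)%N by case: Rnk_J => _; apply=> //; apply/eqP.
split; last by rewrite -rkE; apply/eqP; rewrite eqn_leq rk_g.
move=> u; rewrite -act_set_cat -rkE.
have [gu0 | gu_neq0] := eqVneq (theta i (g ++ u)) 0.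
  left; apply/is_reset_core => j jCr; have [-> // | ji] := eqVneq j i.
  by rewrite (theta_cat wedderburn_phi) g0 ?mul0mx // !inE ji.
right; apply/eqP; rewrite eqn_leq (leq_trans (rk_catl _ _ _)) //=.
case: Rnk_J => _; apply; last exact/eqP.
by rewrite (theta_cat wedderburn_phi); apply: ideal_mulr.
Qed.

End FocusedWords.

Lemma nonreset_rank_reduction (r : 'I_k -> nat) :
  synchronizing delta ->
  (forall i, exists J : 'M[C]_(ns i) -> Prop,
     zero_minimal_ideal delta phi J /\ is_Rnk delta phi J (r i)) ->
  forall w, ~ is_reset w ->
  exists2 u, (size u <= \max_(i in Cr) D2 (r i) m.+1)%N & (rk (w ++ u) < rk w)%N.
Proof.
move=> sync HJ w not_reset_w.
have /exists_inP[i iCr w_neq0] : [exists i in Cr, theta i w != 0].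
  apply: contra_notT not_reset_w => /exists_inPn w0; apply/is_reset_core => j /w0.
  by rewrite negbK => /eqP.
have [J [[ideal_J _ _] Rnk_J]] := HJ i.
have [g0 focused_g] := exists_focused iCr ideal_J Rnk_J w_neq0.
have [stable card_g] := focused_rank_stable ideal_J Rnk_J focused_g.
have sub_w : act_set delta setT (g0 ++ w) \subset act_set delta setT w.
  by rewrite act_set_cat act_setS ?subsetT.
have [u size_u rk_wu] :=
  rank_reduction_of_stable_subset sync sub_w (Rnk_gt1 Rnk_J) card_g stable.
exists u => //; apply: leq_trans size_u _.
exact: (leq_bigmax_cond (F := fun i => D2 (r i) m.+1)).
Qed.

End MinimalCore.

Theorem mainTheorem14 (n : nat) (Sigma : finType)
  (delta : 'I_n -> Sigma -> 'I_n)
  (k : nat) (ns : 'I_k -> nat)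
  (phi : forall i : 'I_k, 'M[C]_(n.-1) -> 'M[C]_(ns i))
  (r : 'I_k -> nat) (Cr : {set 'I_k}) :
  synchronizing delta ->
  semisimple delta ->
  wedderburn delta phi ->
  (forall i, exists J : 'M[C]_(ns i) -> Prop, zero_minimal_ideal delta phi J /\
                       is_Rnk delta phi J (r i)) ->
  is_minimal_core delta phi Cr ->
  exists w : seq Sigma,
    is_reset delta w /\
    (size w <= (n - 1) * \max_(i in Cr) D2 (r i) n)%N.
Proof.
case: n delta phi => [|m] delta phi sync.
  case: sync => s; rewrite /Defs.is_reset rkE => card1.
  by have := max_card (act_set delta setT s); rewrite card1 card_ord.
move=> semisimple_delta wedderburn_phi HJ [core_Cr minimal_Cr].
have reduce :=
  nonreset_rank_reduction wedderburn_phi semisimple_delta core_Cr minimal_Cr sync HJ.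
have [|v reset_v size_v] := reset_extension_of_rank_reduction reduce (m := m) (w := [::]).
  by rewrite rkE (leq_trans (max_card _)) ?card_ord.
by exists v; rewrite subn1.
Qed.
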